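(* Let $\mathbb{F}$ be any field and let $C \subseteq \mathbb{F}^n$ be a subspace that is $\alpha$-non-overlapping for some $\alpha \ge 1$. Then every $M \in C \otimes C$ of rank at least $2$ satisfies $\|M\|_0 \ge \alpha \cdot d(C)^2$.
   Context: $\|\cdot\|_0$ counts nonzero entries. For a subspace $C \ne \{0\}$, $d(C) := \min_{u \in C\setminus\{0\}}\|u\|_0$ is its minimum distance. For subspaces $U \subseteq \mathbb{F}^n$, $V \subseteq \mathbb{F}^m$, $U \otimes V$ is the space of matrices $M \in \mathbb{F}^{n\times m}$ all of whose columns lie in $U$ and all of whose rows lie in $V$. A subspace $C\subseteq \mathbb{F}^n$ is $\alpha$-non-overlapping ($\alpha\ge 1$) if for any $u, v \in C$ linearly independent over $\mathbb{F}$, $|\mathrm{supp}(u)\cup\mathrm{supp}(v)| \ge \alpha \cdot d(C)$, where $\mathrm{supp}(u)$ is the set of nonzero coordinates of $u$. *)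

From HB Require Import structures.
From mathcomp Require Import all_boot all_order all_algebra.
Set Implicit Arguments. Unset Strict Implicit. Unset Printing Implicit Defensive.
Import Order.TTheory GRing.Theory Num.Theory.
Local Open Scope ring_scope.

Definition supp (F : fieldType) (n : nat) (u : 'rV[F]_n) : {set 'I_n} :=
  [set i | u 0 i != 0].

Definition wt (F : fieldType) (n : nat) (u : 'rV[F]_n) : nat := #|supp u|.

Definition mxwt (F : fieldType) (n m : nat) (M : 'M[F]_(n, m)) : nat :=
  #|[set ij : 'I_n * 'I_m | M ij.1 ij.2 != 0]|.

(* d is the minimum distance d(C) of C (C <> {0}): d is attained by a nonzero
   vector of C and every nonzero vector of C has weight >= d. *)
Definition is_min_dist (F : fieldType) (n : nat) (C : {vspace 'rV[F]_n}) (d : nat) : Prop :=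
  (exists2 u, u \in C & (u != 0) && (wt u == d)) /\
  (forall u, u \in C -> u != 0 -> (d <= wt u)%N).

Definition tensor_sp (F : fieldType) (n m : nat)
    (U : {vspace 'rV[F]_n}) (V : {vspace 'rV[F]_m}) (M : 'M[F]_(n, m)) : Prop :=
  (forall j : 'I_m, (col j M)^T \in U) /\ (forall i : 'I_n, row i M \in V).

Definition non_overlapping (F : fieldType) (n : nat) (R : realFieldType)
    (C : {vspace 'rV[F]_n}) (alpha : R) : Prop :=
  1 <= alpha /\
  forall d : nat, is_min_dist C d ->
  forall u v : 'rV[F]_n, u \in C -> v \in C -> free [:: u; v] ->
    alpha * d%:R <= (#|supp u :|: supp v|)%:R.

From HB Require Import structures.
From mathcomp Require Import all_boot all_order all_algebra.
Set Implicit Arguments. Unset Strict Implicit. Unset Printing Implicit Defensive.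
Import Order.TTheory GRing.Theory Num.Theory.
Local Open Scope ring_scope.

(* Since rank M >= 2, M has two linearly independent rows u, v; both lie in C,
   so at least alpha d(C) columns of M are nonzero (every coordinate of
   supp u :|: supp v gives one).  Each nonzero column is a nonzero codeword
   of C, hence has weight at least d(C), and ||M||_0 >= alpha d(C)^2. *)

Section MatrixWeight.

Variables (F : fieldType) (m n : nat).
Implicit Types (M : 'M[F]_(m, n)) (w : 'rV[F]_n).

Definition nz_cols M : {set 'I_n} := [set j | col j M != 0].

Lemma rank_le1_rows_in_line M w :
  (forall i, row i M \in <[w]>%VS) -> (\rank M <= 1)%N.
Proof.
move=> Mw; have /mxrankS sub_w : (M <= w)%MS.
  by apply/row_subP=> i; have /vlineP[k ->] := Mw i; exact: scalemx_sub.
exact: leq_trans sub_w (rank_leq_row w).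
Qed.

Lemma rank_ge2_free_rows M :
  (2 <= \rank M)%N -> exists i1 i2, free [:: row i1 M; row i2 M].
Proof.
move=> rkM; have no_line w : (forall i, row i M \in <[w]>%VS) -> False.
  by move/rank_le1_rows_in_line; rewrite leqNgt (leq_trans _ rkM).
have [i1 nz_i1] : exists i1, row i1 M != 0.
  apply/existsP; apply: contraT; rewrite negb_exists => /forallP M0.
  by exfalso; apply: (no_line 0) => i; rewrite (eqP (negPn (M0 i))) mem0v.
have [i2 out_i2] : exists i2, row i2 M \notin <[row i1 M]>%VS.
  apply/existsP; apply: contraT; rewrite negb_exists => /forallP Mv.
  by exfalso; apply: (no_line (row i1 M)) => i; exact: negPn (Mv i).
by exists i2, i1; rewrite free_cons seq1_free span_seq1 out_i2 nz_i1.
Qed.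

Lemma supp_row_sub_nz_cols M i : supp (row i M) \subset nz_cols M.
Proof.
apply/subsetP=> j; rewrite !inE mxE; apply: contra => /eqP /matrixP /(_ i 0).
by rewrite !mxE => ->.
Qed.

Lemma mxwt_sum_cols M : mxwt M = (\sum_j wt (col j M)^T)%N.
Proof.
rewrite /mxwt -sum1dep_card.
rewrite -(pair_big_dep xpredT (fun i j => M i j != 0) (fun _ _ => 1%N)) /=.
rewrite (exchange_big_dep xpredT) //=; apply: eq_bigr => j _.
rewrite /wt -sum1dep_card; apply: eq_bigl => i.
by rewrite !mxE.
Qed.

Lemma mxwt_ge_nz_cols M (d : nat) :
  (forall j, col j M != 0 -> (d <= wt (col j M)^T)%N) ->
  (#|nz_cols M| * d <= mxwt M)%N.
Proof.
move=> wt_cols; rewrite mxwt_sum_cols -sum1_card big_distrl /=.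
rewrite [X in (_ <= X)%N](bigID (mem (nz_cols M))) /= -[leqLHS]addn0.
apply: leq_add => //; apply: leq_sum => j; rewrite mul1n inE; exact: wt_cols.
Qed.

End MatrixWeight.

Theorem lemma2p5 (F : fieldType) (n : nat) (R : realFieldType)
    (C : {vspace 'rV[F]_n}) (alpha : R) :
  1 <= alpha ->
  non_overlapping C alpha ->
  forall d : nat, is_min_dist C d ->
  forall M : 'M[F]_n, tensor_sp C C M -> (2 <= \rank M)%N ->
    alpha * (d ^ 2)%:R <= (mxwt M)%:R.
Proof.
move=> _ [_ noC] d dC M [colsC rowsC] rkM.
have [i1 [i2 free_rows]] := rank_ge2_free_rows rkM.
have many_cols : alpha * d%:R <= #|nz_cols M|%:R.
  apply: le_trans (noC d dC _ _ (rowsC i1) (rowsC i2) free_rows) _.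
  by rewrite ler_nat subset_leq_card // subUset !supp_row_sub_nz_cols.
have heavy_cols : (#|nz_cols M| * d <= mxwt M)%N.
  apply: mxwt_ge_nz_cols => j nz_j.
  by apply: (proj2 dC) (colsC j) _; rewrite trmx_eq0.
apply: le_trans (_ : (#|nz_cols M| * d)%:R <= _); last by rewrite ler_nat.
by rewrite natrX expr2 mulrA natrM ler_wpM2r.
Qed.
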